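(* If $\Gamma\Vdash t:A$ is derivable in the type system $\lambda 2^{la}$, then $t$ is strongly normalising (for the reduction $\to$ of Lineal).
   Context: Fix a commutative ring $(\mathcal{S},+,\times)$ of scalars. Terms of the linear-algebraic $\lambda$-calculus (Lineal): $t,r,u ::= b \mid (t)\,r \mid \mathbf{0} \mid \alpha.t \mid t+r$, with basis terms $b ::= x \mid \lambda x\,t$. Terms are considered modulo associativity and commutativity of $+$. Substitution $t[b/x]$ is capture-avoiding, with $(\alpha.t+\beta.u)[b/x]=\alpha.(t[b/x])+\beta.(u[b/x])$. One-step reduction $\to$ is the closure under term contexts (modulo AC of $+$) of: $t+\mathbf 0\to t$; $0.t\to\mathbf 0$; $1.t\to t$; $\alpha.\mathbf 0\to\mathbf 0$; $\alpha.(\beta.t)\to(\alpha\times\beta).t$; $\alpha.(t+r)\to\alpha.t+\alpha.r$; $\alpha.t+\beta.t\to(\alpha+\beta).t$, $\alpha.t+t\to(\alpha+1).t$, $t+t\to(1+1).t$ (only if $t$ is a closed normal term); $(t+r)\,u\to(t)\,u+(r)\,u$ and $(u)\,(t+r)\to(u)\,t+(u)\,r$ (only if $t+r$ is a closed normal term); $(\alpha.t)\,r\to\alpha.(t)\,r$ and $(r)\,(\alpha.t)\to\alpha.(r)\,t$ (only if $t$ is a closed normal term); $(\mathbf 0)\,t\to\mathbf 0$; $(t)\,\mathbf 0\to\mathbf 0$; $(\lambda x\,t)\,b\to t[b/x]$ (only if $b$ is a basis term). The type system $\lambda 2^{la}$ has types $A,B ::= X \mid A\to B \mid \forall X.A$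 and contexts $\Gamma$ assigning such types to distinct term variables. Its rules are those of System F: $\Gamma,x:A\Vdash x:A$; from $\Gamma,x:A\Vdash t:B$ infer $\Gamma\Vdash\lambda x\,t:A\to B$; from $\Gamma\Vdash t:A\to B$ and $\Gamma\Vdash r:A$ infer $\Gamma\Vdash (t)\,r:B$; from $\Gamma\Vdash t:\forall X.A$ infer $\Gamma\Vdash t:A[B/X]$; from $\Gamma\Vdash t:A$ with $X$ not free in $\Gamma$ infer $\Gamma\Vdash t:\forall X.A$; together with: $\Gamma\Vdash\mathbf 0:A$ for any $A$; from $\Gamma\Vdash t:A$ and $\Gamma\Vdash r:A$ infer $\Gamma\Vdash t+r:A$; from $\Gamma\Vdash t:A$ infer $\Gamma\Vdash\alpha.t:A$ for any $\alpha\in\mathcal S$. *)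

From mathcomp Require Import all_boot all_algebra.
Set Implicit Arguments. Unset Strict Implicit. Unset Printing Implicit Defensive.
Import GRing.Theory.
Local Open Scope ring_scope.

Section Lineal.
Variable S : comPzRingType.

Inductive term : Type :=
| Var of nat
| Lam of term
| App of term & term
| Zero
| Scal of S & term
| Plus of term & term.

Definition basis (t : term) : Prop :=
  match t with Var _ | Lam _ => True | _ => False end.

Fixpoint tsize (t : term) : nat :=
  match t with
  | Var _ | Zero => 1
  | Lam t | Scal _ t => (tsize t).+1
  | App t r | Plus t r => (tsize t + tsize r).+1
  end.

Fixpoint closed_at (k : nat) (t : term) : Prop :=
  match t with
  | Var n => (n < k)%N
  | Lam t => closed_at k.+1 t
  | App t r | Plus t r => closed_at k t /\ closed_at k r
  | Zero => True
  | Scal _ t => closed_at k t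
  end.
Definition closed (t : term) : Prop := closed_at 0 t.

Fixpoint lift (d c : nat) (t : term) : term :=
  match t with
  | Var n => if (n < c)%N then Var n else Var (n + d)
  | Lam t => Lam (lift d c.+1 t)
  | App t r => App (lift d c t) (lift d c r)
  | Zero => Zero
  | Scal a t => Scal a (lift d c t)
  | Plus t r => Plus (lift d c t) (lift d c r)
  end.

Fixpoint subst (n : nat) (u t : term) : term :=
  match t with
  | Var m => if (m < n)%N then Var m else if m == n then lift n 0 u
             else Var m.-1
  | Lam t => Lam (subst n.+1 u t)
  | App t r => App (subst n u t) (subst n u r)
  | Zero => Zero
  | Scal a t => Scal a (subst n u t)
  | Plus t r => Plus (subst n u t) (subst n u r)
  end.

Inductive ac_eq : term -> term -> Prop :=
| ac_refl t : ac_eq t t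
| ac_sym t r : ac_eq t r -> ac_eq r t
| ac_trans t r u : ac_eq t r -> ac_eq r u -> ac_eq t u
| ac_assoc t r u : ac_eq (Plus t (Plus r u)) (Plus (Plus t r) u)
| ac_comm t r : ac_eq (Plus t r) (Plus r t)
| ac_lam t t' : ac_eq t t' -> ac_eq (Lam t) (Lam t')
| ac_app t t' r r' : ac_eq t t' -> ac_eq r r' -> ac_eq (App t r) (App t' r')
| ac_scal a t t' : ac_eq t t' -> ac_eq (Scal a t) (Scal a t')
| ac_plus t t' r r' : ac_eq t t' -> ac_eq r r' -> ac_eq (Plus t r) (Plus t' r').

(* Head rules, parameterised by the predicate N = "is a closed normal term". *)
Inductive head (N : term -> Prop) : term -> term -> Prop :=
| h_plus0 t : head N (Plus t Zero) t
| h_scal0 t : head N (Scal 0 t) Zero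
| h_scal1 t : head N (Scal 1 t) t
| h_scalZ a : head N (Scal a Zero) Zero
| h_scalS a b t : head N (Scal a (Scal b t)) (Scal (a * b) t)
| h_scalD a t r : head N (Scal a (Plus t r)) (Plus (Scal a t) (Scal a r))
| h_fact a b t : N t -> head N (Plus (Scal a t) (Scal b t)) (Scal (a + b) t)
| h_fact1 a t : N t -> head N (Plus (Scal a t) t) (Scal (a + 1) t)
| h_fact2 t : N t -> head N (Plus t t) (Scal (1 + 1) t)
| h_appDl t r u : N (Plus t r) ->
    head N (App (Plus t r) u) (Plus (App t u) (App r u))
| h_appDr u t r : N (Plus t r) ->
    head N (App u (Plus t r)) (Plus (App u t) (App u r))
| h_appSl a t r : N t -> head N (App (Scal a t) r) (Scal a (App t r))
| h_appSr r a t : N t -> head N (App r (Scal a t)) (Scal a (App r t))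
| h_app0l t : head N (App Zero t) Zero
| h_app0r t : head N (App t Zero) Zero
| h_beta t b : basis b -> head N (App (Lam t) b) (subst 0 b t).

Inductive ctx (N : term -> Prop) : term -> term -> Prop :=
| c_head t r : head N t r -> ctx N t r
| c_lam t t' : ctx N t t' -> ctx N (Lam t) (Lam t')
| c_appl t t' r : ctx N t t' -> ctx N (App t r) (App t' r)
| c_appr t r r' : ctx N r r' -> ctx N (App t r) (App t r')
| c_scal a t t' : ctx N t t' -> ctx N (Scal a t) (Scal a t')
| c_plusl t t' r : ctx N t t' -> ctx N (Plus t r) (Plus t' r)
| c_plusr t r r' : ctx N r r' -> ctx N (Plus t r) (Plus t r').

Definition redN (N : term -> Prop) (t r : term) : Prop :=
  exists t' r', [/\ ac_eq t t', ctx N t' r' & ac_eq r' r].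

(* Normality is defined by recursion on size: the side conditions of the
   rules applied to t only mention strictly smaller terms, so fuel
   (tsize t).+1 suffices (nf_fuel k s is independent of k > tsize s). *)
Fixpoint nf_fuel (k : nat) (t : term) : Prop :=
  match k with
  | 0 => False
  | k.+1 => ~ exists r, redN (fun s => closed s /\ nf_fuel k s) t r
  end.

Definition normal (t : term) : Prop := nf_fuel (tsize t).+1 t.
Definition closed_normal (t : term) : Prop := closed t /\ normal t.

Definition red (t r : term) : Prop := redN closed_normal t r.

Definition SN (t : term) : Prop := Acc (fun u v => red v u) t.

End Lineal.

Inductive ty : Type :=
| TVar of nat
| TArr of ty & ty
| TAll of ty.

Fixpoint tlift (d c : nat) (A : ty) : ty :=
  match A with
  | TVar n => if (n < c)%N then TVar n else TVar (n + d)
  | TArr A B => TArr (tlift d c A) (tlift d c B)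
  | TAll A => TAll (tlift d c.+1 A)
  end.

Fixpoint tsubst (n : nat) (B A : ty) : ty :=
  match A with
  | TVar m => if (m < n)%N then TVar m else if m == n then tlift n 0 B
              else TVar m.-1
  | TArr A1 A2 => TArr (tsubst n B A1) (tsubst n B A2)
  | TAll A => TAll (tsubst n.+1 B A)
  end.

(* Typing of lambda2^la; a context maps de Bruijn index i to its i-th entry.
   Generalisation: the side condition "X not free in Gamma" is realised by
   shifting the type variables of Gamma. *)
Inductive typed (S : comPzRingType) : seq ty -> term S -> ty -> Prop :=
| T_var G n A : onth G n = Some A -> typed G (Var S n) A
| T_lam G t A B : typed (A :: G) t B -> typed G (Lam t) (TArr A B)
| T_app G t r A B : typed G t (TArr A B) -> typed G r A -> typed G (App t r) B
| T_inst G t A B : typed G t (TAll A) -> typed G t (tsubst 0 B A)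
| T_gen G t A : typed (map (tlift 1 0) G) t A -> typed G t (TAll A)
| T_zero G A : typed G (Zero S) A
| T_plus G t r A : typed G t A -> typed G r A -> typed G (Plus t r) A
| T_scal G a t A : typed G t A -> typed G (Scal a t) A.

From Pilot Require Import Defs.
From Stdlib Require Import List Permutation Relation_Operators Transitive_Closure.
From mathcomp Require Import all_boot ssralg zify.
Set Implicit Arguments. Unset Strict Implicit. Unset Printing Implicit Defensive.

(* Dropping the side conditions of the rules only adds reduction steps, so it suffices to prove
   strong normalisation of the unrestricted reduction [ured].  We use Girard's reducibility
   candidates, adapted to the algebraic rules: a candidate is also closed under AC, contains [0],
   and contains [t + r] (resp. [alpha.t]) exactly when it contains [t] and [r] (resp. [t]).
   The algebraic heart is that a term is strongly normalising as soon as its atoms (its maximal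
   subterms that are neither sums nor scalar multiples) are: an algebraic step keeps a
   sub-multiset of the atoms and decreases a weight, and any other step replaces one atom by the
   atoms of one of its reducts, so the multiset of atoms decreases for the multiset extension of
   "reduct or AC-part of". *)

(** * Multiset order *)

Section MultisetOrder.
Variables (A : Type) (R : A -> A -> Prop).

Definition mult_step (l' l : list A) : Prop := exists a K M,
  [/\ Permutation l (a :: M), Permutation l' (K ++ M)%list & Forall (R^~ a) K].

Lemma Acc_mult_perm l l' : Acc mult_step l -> Permutation l l' -> Acc mult_step l'.
Proof.
move=> accl ll'; constructor=> m [a [K [M [l'aM mKM RK]]]].
by apply: (Acc_inv accl); exists a, K, M; split=> //; apply: Permutation_trans l'aM.
Qed.

Lemma Acc_mult_app a K M :
  (forall b, R b a -> forall M, Acc mult_step M -> Acc mult_step (b :: M)) ->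
  Forall (R^~ a) K -> Acc mult_step M -> Acc mult_step (K ++ M)%list.
Proof. by move=> IHa; elim=> [|b K' ltba _ IHK] accM /=; last exact: IHa b ltba _ (IHK accM). Qed.

Lemma Acc_mult_cons a : Acc R a -> forall M, Acc mult_step M -> Acc mult_step (a :: M).
Proof.
elim=> {}a _ IHa M; elim=> {}M accM IHM; have {}accM := Acc_intro _ accM.
constructor=> N [a' [K [M' [aMa'M' NKM' RK]]]].
have [aa'|a'M] : a = a' \/ In a' M.
  by apply/in_inv/(Permutation_in _ (Permutation_sym aMa'M')); left.
- subst a'; apply: Acc_mult_perm (Permutation_sym NKM').
  apply: (Acc_mult_app IHa RK); apply: Acc_mult_perm accM _.
  exact: Permutation_cons_inv aMa'M'.
- have [M1 [M2 defM]] := in_split _ _ a'M; subst M.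
  have M'aM : Permutation M' (a :: M1 ++ M2)%list.
    exact: (@Permutation_cons_app_inv _ M' (a :: M1) M2 a' (Permutation_sym aMa'M')).
  apply: Acc_mult_perm (IHM (K ++ M1 ++ M2)%list _) _.
    by exists a', K, (M1 ++ M2)%list; split=> //; apply/Permutation_sym/Permutation_middle.
  apply: Permutation_sym; apply: Permutation_trans NKM' _.
  apply: Permutation_trans (Permutation_app_head _ M'aM) _.
  exact: Permutation_sym (Permutation_middle _ _ _).
Qed.

Lemma Acc_mult l : Forall (Acc R) l -> Acc mult_step l.
Proof.
elim=> [|a l' acca _ accl]; last exact: Acc_mult_cons.
by constructor=> l' [a [K [M [/Permutation_nil]]]].
Qed.

Lemma mult_drop l l1 k m : Permutation l (l1 ++ k :: m)%list -> clos_trans _ mult_step l1 l.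
Proof.
elim: m l k => [|k' m IHm] l k lk.
  apply: t_step; exists k, nil, l1; split=> //.
  exact: Permutation_trans lk (Permutation_sym (Permutation_cons_append _ _)).
apply: t_trans (IHm _ k' (Permutation_refl _)) (t_step _ _ _ _ _).
exists k, nil, (l1 ++ k' :: m)%list; split=> //.
exact: Permutation_trans lk (Permutation_sym (Permutation_middle _ _ _)).
Qed.

Variable E : A -> A -> Prop.
Hypotheses (E_refl : forall a, E a a) (E_sym : forall a b, E a b -> E b a)
  (E_trans : forall a b c, E a b -> E b c -> E a c).
Hypothesis R_E : forall k a a', E a a' -> R k a -> R k a'.

Definition perm_eqv (l l' : list A) : Prop := exists2 m, Permutation l m & Forall2 E m l'.

Lemma Forall2_E_refl l : Forall2 E l l.
Proof. by elim: l => [|a l IHl]; constructor. Qed.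

Lemma Forall2_E_sym l m : Forall2 E l m -> Forall2 E m l.
Proof. by elim=> // a b l' m' ab _ IH; constructor; auto. Qed.

Lemma Forall2_E_trans l m n : Forall2 E l m -> Forall2 E m n -> Forall2 E l n.
Proof.
move=> lm; elim: lm n => [|a b l' m' ab _ IH] n mn; inversion mn => //.
by subst; constructor; [apply: E_trans ab _ | apply: IH].
Qed.

Lemma perm_eqv_refl l : perm_eqv l l.
Proof. by exists l; [apply: Permutation_refl | apply: Forall2_E_refl]. Qed.

Lemma Permutation_perm_eqv l l' : Permutation l l' -> perm_eqv l l'.
Proof. by exists l'; last exact: Forall2_E_refl. Qed.

Lemma perm_eqv_sym l l' : perm_eqv l l' -> perm_eqv l' l.
Proof.
move=> [m lm ml'].
have [n [l'n ln]] := Permutation_Forall2 (Permutation_sym lm) ml'.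
by exists n; last apply: Forall2_E_sym.
Qed.

Lemma perm_eqv_trans l l' l'' : perm_eqv l l' -> perm_eqv l' l'' -> perm_eqv l l''.
Proof.
move=> [m lm ml'] [n l'n nl''].
have [m' [mm' nm']] := Permutation_Forall2 l'n (Forall2_E_sym ml').
exists m'; first exact: Permutation_trans lm mm'.
exact: Forall2_E_trans (Forall2_E_sym nm') nl''.
Qed.

Lemma perm_eqv_app l l' m m' :
  perm_eqv l l' -> perm_eqv m m' -> perm_eqv (l ++ m)%list (l' ++ m')%list.
Proof.
move=> [l1 ll1 l1l'] [m1 mm1 m1m'].
by exists (l1 ++ m1)%list; [apply: Permutation_app | apply: Forall2_app].
Qed.

Lemma Forall_perm_eqv (P : A -> Prop) l l' : (forall a b, E a b -> P a -> P b) ->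
  perm_eqv l l' -> Forall P l -> Forall P l'.
Proof.
move=> PE [m lm ml'] /(Permutation_Forall lm); elim: ml' => // a b m' l'' ab _ IH.
by move=> /Forall_cons_iff[Pa Pm]; constructor; [apply: PE Pa | apply: IH].
Qed.

Lemma perm_eqv_app_inv l m1 m2 : perm_eqv l (m1 ++ m2)%list ->
  exists l1 l2, [/\ Permutation l (l1 ++ l2)%list, Forall2 E l1 m1 & Forall2 E l2 m2].
Proof.
move=> [m lm /Forall2_app_inv_r [l1 [l2 [l1m1 [l2m2 defm]]]]].
by exists l1, l2; subst m; split.
Qed.

Lemma mult_step_eqv l a K M : perm_eqv l (a :: M) -> Forall (R^~ a) K ->
  exists2 l', mult_step l' l & perm_eqv l' (K ++ M)%list.
Proof.
move=> [[|a0 M0] la0M0 EaM] RK; first by inversion EaM.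
have [a0a M0M] := proj1 (Forall2_cons_iff _ _ _ _ _) EaM.
exists (K ++ M0)%list.
  exists a0, K, M0; split; [exact: la0M0 | exact: Permutation_refl |].
  by apply: Forall_impl RK => k; apply: R_E; apply: E_sym.
by apply: perm_eqv_app (perm_eqv_refl _) _; exists M0; first exact: Permutation_refl.
Qed.

Lemma mult_drop_eqv l m1 k m2 : perm_eqv l (m1 ++ k :: m2)%list ->
  exists2 l', clos_trans _ mult_step l' l & perm_eqv l' m1.
Proof.
move=> /perm_eqv_app_inv [l1 [[|k' l2] [ll12 E1 E2]]]; first by inversion E2.
by exists l1; [apply: mult_drop ll12 | exists l1; first exact: Permutation_refl].
Qed.
End MultisetOrder.

(** * AC-equivalence and atoms *)

Section Lineal.
Variable S : comPzRingType.
Notation tm := (term S).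
Notation ac_eqv := (perm_eqv (@ac_eq S)).
Let ac_eqv_refl := perm_eqv_refl (@ac_refl S).
Let Permutation_ac_eqv := Permutation_perm_eqv (@ac_refl S).
Let ac_eqv_sym := perm_eqv_sym (@ac_sym S).
Let ac_eqv_trans := perm_eqv_trans (@ac_sym S) (@ac_trans S).

Definition ac_top (a b : tm) : Prop :=
  match a, b with
  | Var n, Var m => n = m
  | Lam s, Lam s' => ac_eq s s'
  | App s u, App s' u' => ac_eq s s' /\ ac_eq u u'
  | Zero, Zero => True
  | Scal c s, Scal c' s' => c = c' /\ ac_eq s s'
  | Plus _ _, Plus _ _ => True
  | _, _ => False
  end.

Lemma ac_eq_top (a b : tm) : ac_eq a b -> ac_top a b.
Proof.
elim=> {a b} [t|t r _|t r u _ + _||||||] //=.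
- by case: t => *; repeat split; apply: ac_refl.
- by case: t; case: r => /= *; intuition (subst; eauto using ac_sym).
- by case: t; case: r; case: u => /= *; intuition (subst; eauto using ac_trans).
Qed.

Lemma ac_size (a b : tm) : ac_eq a b -> Defs.tsize a = Defs.tsize b.
Proof. by elim=> //= *; lia. Qed.

Lemma basis_ac (a b : tm) : ac_eq a b -> basis b -> basis a.
Proof. by move/ac_eq_top; case: a; case: b. Qed.

Fixpoint atoms (t : tm) : list tm :=
  match t with
  | Plus a b => (atoms a ++ atoms b)%list
  | Scal _ a => atoms a
  | Zero => nil
  | _ => [:: t]
  end.

(* Every algebraic head rule decreases [am]; scalars weigh double so that
   [alpha.(t + r) -> alpha.t + alpha.r] decreases too. *)
Fixpoint am (t : tm) : nat :=
  match t with
  | Plus a b => am a + am b + 2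
  | Scal _ a => 2 * am a + 1
  | Zero => 0
  | _ => 1
  end.

Lemma ac_am (a b : tm) : ac_eq a b -> am a = am b.
Proof. by elim=> //= *; lia. Qed.

Lemma ac_atoms (a b : tm) : ac_eq a b -> ac_eqv (atoms a) (atoms b).
Proof.
elim=> {a b} /=.
- by move=> t; apply: ac_eqv_refl.
- by move=> t r _; apply: ac_eqv_sym.
- by move=> t r u _ tr _; apply: ac_eqv_trans tr.
- by move=> t r u; rewrite app_assoc; apply: ac_eqv_refl.
- by move=> t r; apply/Permutation_ac_eqv/Permutation_app_comm.
- move=> t t' tt' _; exists [:: Lam t]; first exact: Permutation_refl.
  by constructor; [apply: ac_lam | constructor].
- move=> t t' r r' tt' _ rr' _; exists [:: App t r]; first exact: Permutation_refl.
  by constructor; [apply: ac_app | constructor].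
- by [].
- by move=> t t' r r' _ tt' _ rr'; apply: perm_eqv_app.
Qed.

(** * Parallel substitution *)

Definition scons (T : Type) (x : T) (f : nat -> T) (n : nat) : T :=
  if n is k.+1 then f k else x.

Definition up_ren (xi : nat -> nat) (n : nat) : nat :=
  if n is k.+1 then (xi k).+1 else 0.

Fixpoint ren (xi : nat -> nat) (t : tm) : tm :=
  match t with
  | Var n => Var S (xi n)
  | Lam a => Lam (ren (up_ren xi) a)
  | App a b => App (ren xi a) (ren xi b)
  | Zero => Zero S
  | Scal c a => Scal c (ren xi a)
  | Plus a b => Plus (ren xi a) (ren xi b)
  end.

Definition up_sub (sg : nat -> tm) (n : nat) : tm :=
  if n is k.+1 then ren succn (sg k) else Var S 0.

Fixpoint psub (sg : nat -> tm) (t : tm) : tm :=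
  match t with
  | Var n => sg n
  | Lam a => Lam (psub (up_sub sg) a)
  | App a b => App (psub sg a) (psub sg b)
  | Zero => Zero S
  | Scal c a => Scal c (psub sg a)
  | Plus a b => Plus (psub sg a) (psub sg b)
  end.

Lemma ren_ext (t : tm) xi zeta : xi =1 zeta -> ren xi t = ren zeta t.
Proof.
elim: t xi zeta => [n|a IH|a IHa b IHb||c a IH|a IHa b IHb] xi zeta E /=;
  rewrite ?E ?(IH _ _ E) ?(IHa _ _ E) ?(IHb _ _ E) //.
by rewrite (IH _ (up_ren zeta)) // => -[] //= k; rewrite E.
Qed.

Lemma psub_ext (t : tm) sg tau : sg =1 tau -> psub sg t = psub tau t.
Proof.
elim: t sg tau => [n|a IH|a IHa b IHb||c a IH|a IHa b IHb] sg tau E /=;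
  rewrite ?E ?(IH _ _ E) ?(IHa _ _ E) ?(IHb _ _ E) //.
by rewrite (IH _ (up_sub tau)) // => -[] //= k; rewrite E.
Qed.

Lemma ren_ren (t : tm) xi zeta : ren xi (ren zeta t) = ren (xi \o zeta) t.
Proof.
elim: t xi zeta => [n|a IH|a IHa b IHb||c a IH|a IHa b IHb] xi zeta /=;
  rewrite ?IH ?IHa ?IHb //.
by congr Lam; apply: ren_ext => -[].
Qed.

Lemma psub_ren (t : tm) sg xi : psub sg (ren xi t) = psub (sg \o xi) t.
Proof.
elim: t sg xi => [n|a IH|a IHa b IHb||c a IH|a IHa b IHb] sg xi /=;
  rewrite ?IH ?IHa ?IHb //.
by congr Lam; apply: psub_ext => -[].
Qed.

Lemma ren_psub (t : tm) sg xi : ren xi (psub sg t) = psub (ren xi \o sg) t.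
Proof.
elim: t sg xi => [n|a IH|a IHa b IHb||c a IH|a IHa b IHb] sg xi /=;
  rewrite ?IH ?IHa ?IHb //.
by congr Lam; apply: psub_ext => -[|k] //=; rewrite !ren_ren.
Qed.

Lemma psub_psub (t : tm) sg tau : psub sg (psub tau t) = psub (psub sg \o tau) t.
Proof.
elim: t sg tau => [n|a IH|a IHa b IHb||c a IH|a IHa b IHb] sg tau /=;
  rewrite ?IH ?IHa ?IHb //.
by congr Lam; apply: psub_ext => -[|k] //=; rewrite psub_ren ren_psub.
Qed.

Lemma ren_psubE (t : tm) xi : ren xi t = psub (Var S \o xi) t.
Proof.
elim: t xi => [n|a IH|a IHa b IHb||c a IH|a IHa b IHb] xi /=; rewrite ?IH ?IHa ?IHb //.
by congr Lam; apply: psub_ext => -[].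
Qed.

Lemma psub_id (t : tm) : psub (Var S) t = t.
Proof.
elim: t => [n|a IH|a IHa b IHb||c a IH|a IHa b IHb] /=; rewrite ?IH ?IHa ?IHb //.
by rewrite -[in RHS]IH; congr Lam; apply: psub_ext => -[].
Qed.

Lemma lift_renE d c (t : tm) : Defs.lift d c t = ren (fun n => if n < c then n else n + d) t.
Proof.
elim: t c => [n|a IH|a IHa b IHb||c0 a IH|a IHa b IHb] c /=; rewrite ?IH ?IHa ?IHb //.
- by case: ifP.
- by congr Lam; apply: ren_ext => -[|k] //=; rewrite ltnS; case: ifP.
Qed.

Lemma lift0 c (t : tm) : Defs.lift 0 c t = t.
Proof.
by rewrite lift_renE ren_psubE -[RHS]psub_id; apply: psub_ext => n /=; rewrite addn0 if_same.
Qed.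

Definition subst_fun (n : nat) (u : tm) (m : nat) : tm :=
  if m < n then Var S m else if m == n then Defs.lift n 0 u else Var S m.-1.

Lemma subst_psubE n (u t : tm) : subst n u t = psub (subst_fun n u) t.
Proof.
elim: t n u => [m|a IH|a IHa b IHb||c a IH|a IHa b IHb] n u /=; rewrite ?IH ?IHa ?IHb //.
congr Lam; apply: psub_ext => -[|k] //=; rewrite /subst_fun ltnS eqSS.
case: (ltngtP k n) => [|nk|_] //=; first by case: k nk.
by rewrite !lift_renE ren_ren; apply: ren_ext => i /=; lia.
Qed.

Lemma subst_up_sub (b : tm) sg s : subst 0 b (psub (up_sub sg) s) = psub (scons b sg) s.
Proof.
rewrite subst_psubE psub_psub; apply: psub_ext => -[|k] /=; first by rewrite /subst_fun lift0.
by rewrite psub_ren -[RHS]psub_id; apply: psub_ext.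
Qed.

Lemma subst_subst n (b v t : tm) :
  subst n b (subst 0 v t) = subst 0 (subst n b v) (subst n.+1 b t).
Proof.
rewrite !subst_psubE !psub_psub; apply: psub_ext => -[|j] /=.
  by rewrite /subst_fun /= !lift0.
rewrite /subst_fun /= ltnS eqSS; case: (ltngtP j n) => [|nj|_] //=; first by case: j nj.
by rewrite !lift_renE psub_ren ren_psubE; apply: psub_ext => i /=; rewrite addnS.
Qed.

Lemma basis_subst n (b v : tm) : basis b -> basis v -> basis (subst n b v).
Proof.
move=> bb; case: v => [m|s||||] //= _.
by case: ifP => // _; case: ifP => // _; case: b bb => //= k _; case: ifP.
Qed.

Lemma ac_lift (u u' : tm) d c : ac_eq u u' -> ac_eq (Defs.lift d c u) (Defs.lift d c u').
Proof.
move=> uu'; elim: uu' c => {u u'} /=; intros; by constructor; eauto using ac_sym, ac_trans.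
Qed.

Lemma ac_subst_l n (u t t' : tm) : ac_eq t t' -> ac_eq (subst n u t) (subst n u t').
Proof.
move=> tt'; elim: tt' n => {t t'} /=; intros; by constructor; eauto using ac_sym, ac_trans.
Qed.

Lemma ac_subst_r n (u u' t : tm) : ac_eq u u' -> ac_eq (subst n u t) (subst n u' t).
Proof.
elim: t n => [m|a IH|a IHa b IHb||c a IH|a IHa b IHb] n uu' /=; try by constructor; auto.
by case: ifP => _; [exact: ac_refl | case: ifP => _; [exact: ac_lift | exact: ac_refl]].
Qed.

(** * Unrestricted reduction *)

Definition uctx : tm -> tm -> Prop := ctx (fun _ => True).
Definition ured : tm -> tm -> Prop := redN (fun _ => True).
Definition uSN : tm -> Prop := Acc (fun u v => ured v u).

Lemma ured_acl (a a' b : tm) : ac_eq a a' -> ured a' b -> ured a b.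
Proof. by move=> aa' [x [y [a'x xy yb]]]; exists x, y; split=> //; apply: ac_trans aa' a'x. Qed.

Lemma uctx_ured (a b : tm) : uctx a b -> ured a b.
Proof. by move=> ab; exists a, b; split=> //; apply: ac_refl. Qed.

Lemma ured_congr (f : tm -> tm) (a b : tm) :
  (forall x y, uctx x y -> uctx (f x) (f y)) -> (forall x y, ac_eq x y -> ac_eq (f x) (f y)) ->
  ured a b -> ured (f a) (f b).
Proof.
move=> fctx fac [x [y [ax xy yb]]].
by exists (f x), (f y); split; [apply: fac | apply: fctx | apply: fac].
Qed.

Lemma ured_appl (u a b : tm) : ured a b -> ured (App a u) (App b u).
Proof.
by apply: (@ured_congr (fun x => App x u)) => x y xy;
  [apply: c_appl | apply: ac_app xy (ac_refl u)].
Qed.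

Lemma ured_scal c (a b : tm) : ured a b -> ured (Scal c a) (Scal c b).
Proof. by apply: (@ured_congr (Scal c)) => x y xy; [apply: c_scal | apply: ac_scal]. Qed.

Lemma ured_plusl (r a b : tm) : ured a b -> ured (Plus a r) (Plus b r).
Proof.
by apply: (@ured_congr (fun x => Plus x r)) => x y xy;
  [apply: c_plusl | apply: ac_plus xy (ac_refl r)].
Qed.

Lemma uctx_subst (b a a' : tm) n : basis b -> uctx a a' -> uctx (subst n b a) (subst n b a').
Proof.
move=> bb aa'; elim: aa' n => {a a'} /=.
- move=> a a' [] *; apply: c_head; rewrite /= ?subst_subst; constructor=> //.
  exact: basis_subst.
- by move=> t t' _ IH n; apply/c_lam/IH.
- by move=> t t' r _ IH n; apply/c_appl/IH.
- by move=> t r r' _ IH n; apply/c_appr/IH.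
- by move=> c t t' _ IH n; apply/c_scal/IH.
- by move=> t t' r _ IH n; apply/c_plusl/IH.
- by move=> t r r' _ IH n; apply/c_plusr/IH.
Qed.

Lemma ured_subst (b a a' : tm) n : basis b -> ured a a' -> ured (subst n b a) (subst n b a').
Proof.
move=> bb [x [y [ax xy ya']]]; exists (subst n b x), (subst n b y).
by split; [apply: ac_subst_l | apply: uctx_subst | apply: ac_subst_l].
Qed.

Lemma ured_var n (w : tm) : ~ ured (Var S n) w.
Proof.
move=> [x [y [/ac_eq_top + xy _]]]; case: x xy => // m xy _.
by inversion xy; inversion H.
Qed.

Lemma ured_lam_inv (s w : tm) : ured (Lam s) w -> exists2 s', ured s s' & ac_eq (Lam s') w.
Proof.
move=> [x [y [/ac_eq_top + xy yw]]]; case: x xy => // s1 s1y ss1.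
inversion s1y as [? ? hd|? s2 s1s2| | | | |]; subst; first by inversion hd.
exists s2 => //; apply: ured_acl ss1 _.
by exists s1, s2; split=> //; apply: ac_refl.
Qed.

Inductive fun_red (t u : tm) : tm -> Prop :=
| fun_red_step t' of ured t t' : fun_red t u (App t' u)
| fun_red_plus t1 t2 of ac_eq t (Plus t1 t2) : fun_red t u (Plus (App t1 u) (App t2 u))
| fun_red_scal c t1 of ac_eq t (Scal c t1) : fun_red t u (Scal c (App t1 u))
| fun_red_zero of ac_eq t (Zero S) : fun_red t u (Zero S)
| fun_red_beta s of ac_eq t (Lam s) & basis u : fun_red t u (subst 0 u s).

Inductive arg_red (t u : tm) : tm -> Prop :=
| arg_red_step u' of ured u u' : arg_red t u (App t u')
| arg_red_plus u1 u2 of ac_eq u (Plus u1 u2) : arg_red t u (Plus (App t u1) (App t u2))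
| arg_red_scal c u1 of ac_eq u (Scal c u1) : arg_red t u (Scal c (App t u1))
| arg_red_zero of ac_eq u (Zero S) : arg_red t u (Zero S).

Lemma fun_red_ured (t u w : tm) : fun_red t u w -> ured (App t u) w.
Proof.
have acl t' : ac_eq t t' -> ac_eq (App t u) (App t' u) by move=> tt'; apply: ac_app tt' (ac_refl u).
case=> [t' tt'|t1 t2 /acl tt'|c t1 /acl tt'|/acl tt'|s /acl tt' bu]; first exact: ured_appl.
all: by apply: ured_acl tt' (uctx_ured (c_head _)); constructor.
Qed.

Ltac ac_congr := repeat first
  [ assumption | apply: ac_refl | apply: ac_app | apply: ac_plus | apply: ac_scal ].

Lemma ured_app_inv (t u w : tm) : ured (App t u) w ->
  exists2 w', fun_red t u w' \/ arg_red t u w' & ac_eq w' w.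
Proof.
move=> [x [y [/ac_eq_top + xy yw]]]; case: x xy => // t1 u1 xy [tt1 uu1].
suff [w' w'red w'y] : exists2 w', fun_red t u w' \/ arg_red t u w' & ac_eq w' y.
  by exists w' => //; apply: ac_trans w'y yw.
inversion xy as [? ? hd | | ? t1' ? t1t1' | ? ? u1' u1u1' | | |]; subst.
- inversion hd as [| | | | | | | | | a b ? _ | ? a b _ | c a ? _ | ? c a _ | ? | ? | s v bv]; subst.
  + by exists (Plus (App a u) (App b u)); [left; apply: fun_red_plus | ac_congr].
  + by exists (Plus (App t a) (App t b)); [right; apply: arg_red_plus | ac_congr].
  + by exists (Scal c (App a u)); [left; apply: fun_red_scal | ac_congr].
  + by exists (Scal c (App t a)); [right; apply: arg_red_scal | ac_congr].
  + by exists (Zero S); [left; apply: fun_red_zero | apply: ac_refl].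
  + by exists (Zero S); [right; apply: arg_red_zero | apply: ac_refl].
  + exists (subst 0 u s); first by left; apply: fun_red_beta (basis_ac uu1 bv).
    exact: ac_subst_r.
- exists (App t1' u); last by ac_congr.
  by left; apply/fun_red_step/(ured_acl tt1); exists t1, t1'; split=> //; apply: ac_refl.
- exists (App t u1'); last by ac_congr.
  by right; apply/arg_red_step/(ured_acl uu1); exists u1, u1'; split=> //; apply: ac_refl.
Qed.

(** * Strong normalisation from the atoms *)

Definition alg_step (x y : tm) : Prop :=
  am y < am x /\ exists l, Permutation (atoms x) (atoms y ++ l)%list.

Definition atom_step (x y : tm) : Prop := exists a w M,
  [/\ Permutation (atoms x) (a :: M), ured a w & Permutation (atoms y) (atoms w ++ M)%list].

Lemma uhead_atoms (x y : tm) : Defs.head (fun _ => True) x y -> alg_step x y \/ atom_step x y.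
Proof.
case: x => [n|s|t u||c t|t r] hd; try by inversion hd.
  right; exists (App t u), y, nil; split; first exact: Permutation_refl.
    exact/uctx_ured/c_head.
  by rewrite app_nil_r; apply: Permutation_refl.
all: left; inversion hd; subst; (split; [rewrite /=; lia |]).
all: by [exists nil; rewrite /= ?app_nil_r; apply: Permutation_refl
        | eexists; apply: Permutation_refl].
Qed.

Lemma uctx_atoms (x y : tm) : uctx x y -> alg_step x y \/ atom_step x y.
Proof.
have whole a b : uctx a b -> atoms a = [:: a] -> alg_step a b \/ atom_step a b.
  move=> /uctx_ured ab aa; right; exists a, b, nil; rewrite aa app_nil_r.
  by split=> //; apply: Permutation_refl.
elim=> {x y}.
- exact: uhead_atoms.
- by move=> t t' tt' _; apply: whole => //; apply: c_lam.
- by move=> t t' r tt' _; apply: whole => //; apply: c_appl.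
- by move=> t r r' rr' _; apply: whole => //; apply: c_appr.
- by move=> c t t' _ [[am_lt tl] | ?]; [left; split => //=; lia | right].
- move=> t t' r _ [[am_lt [l tl]] | [a [w [M [ta aw t'w]]]]].
    left; split; first by rewrite /=; lia.
    exists l; apply: Permutation_trans (Permutation_app_tail _ tl) _.
    by rewrite /= -!app_assoc; apply: Permutation_app_head; apply: Permutation_app_comm.
  right; exists a, w, (M ++ atoms r)%list; split=> //=; first exact: Permutation_app_tail _ ta.
  by rewrite app_assoc; apply: Permutation_app_tail.
- move=> t r r' _ [[am_lt [l rl]] | [a [w [M [ra aw r'w]]]]].
    left; split; first by rewrite /=; lia.
    by exists l; rewrite /= -app_assoc; apply: Permutation_app_head.
  right; exists a, w, (atoms t ++ M)%list; split=> //=.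
    apply: Permutation_trans (Permutation_app_head _ ra) _.
    exact: Permutation_sym (Permutation_middle _ _ _).
  apply: Permutation_trans (Permutation_app_head _ r'w) _.
  exact: Permutation_app_swap_app.
Qed.

Definition ac_part (a b : tm) : Prop :=
  (exists r, ac_eq a (Plus b r)) \/ exists c, ac_eq a (Scal c b).
Definition ac_parts : tm -> tm -> Prop := clos_refl_trans_n1 tm ac_part.
Definition ord (b a : tm) : Prop := ured a b \/ ac_part a b.
Definition below : tm -> tm -> Prop := clos_trans tm ord.

Lemma ac_part_plusl (a b r : tm) : ac_eq a (Plus b r) -> ac_part a b.
Proof. by left; exists r. Qed.

Lemma ac_part_plusr (a b r : tm) : ac_eq a (Plus r b) -> ac_part a b.
Proof. by move=> abr; left; exists r; apply: ac_trans abr (ac_comm _ _). Qed.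

Lemma ac_part_scal c (a b : tm) : ac_eq a (Scal c b) -> ac_part a b.
Proof. by right; exists c. Qed.

Lemma ac_part_size (a b : tm) : ac_part a b -> Defs.tsize b < Defs.tsize a.
Proof. by case=> [[r]|[c]] /ac_size /= ->; lia. Qed.

Lemma ac_part_ured (a b b' : tm) :
  ac_part a b -> ured b b' -> exists2 a', ured a a' & ac_part a' b'.
Proof.
case=> [[r ab]|[c ab]] bb'.
  by exists (Plus b' r); [apply: ured_acl ab (ured_plusl r bb') | apply/ac_part_plusl/ac_refl].
by exists (Scal c b'); [apply: ured_acl ab (ured_scal c bb') | apply/ac_part_scal/ac_refl].
Qed.

Lemma ac_parts_ured (a b b' : tm) :
  ac_parts a b -> ured b b' -> exists2 a', ured a a' & ac_parts a' b'.
Proof.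
move=> ab; elim: ab b' => {b} [|b c bc _ IH] c' cc'; first by exists c'; last exact: rtn1_refl.
have [b' bb' b'c'] := ac_part_ured bc cc'; have [a' aa' a'b'] := IH b' bb'.
by exists a'; last exact: rtn1_trans b'c' a'b'.
Qed.

(* Reductions of a part lift to the whole, and parts are smaller: a lexicographic argument. *)
Lemma Acc_ord (a : tm) : uSN a -> Acc ord a.
Proof.
move=> sn; suff: forall c, ac_parts a c -> Acc ord c by apply; exact: rtn1_refl.
elim: sn => {}a _ IHa c; move: {2}(Defs.tsize c).+1 (ltnSn (Defs.tsize c)) => n.
elim: n c => [|n IHn] c cn ac; first by rewrite ltn0 in cn.
constructor=> b [cb | cpb].
  by have [a' aa' a'b] := ac_parts_ured ac cb; apply: IHa aa' b a'b.
by apply: IHn (rtn1_trans _ _ _ _ _ cpb ac); have := ac_part_size cpb; lia.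
Qed.

Lemma uSN_part (a b : tm) : uSN a -> ac_part a b -> uSN b.
Proof.
move=> sn; elim: sn b => {}a _ IHa b ab; constructor=> b' bb'.
by have [a' aa' a'b'] := ac_part_ured ab bb'; apply: IHa aa' _ a'b'.
Qed.

Lemma ac_parts_atoms (a w x : tm) : ac_parts a w -> In x (atoms w) -> ac_parts a x.
Proof.
elim: w a => [n|s _|t _ u _| |c t IH|t IHt r IHr] a aw /=; try by case=> [<-|[]].
- by apply: IH; apply: rtn1_trans aw; apply/ac_part_scal/ac_refl.
- move=> /(in_app_or _ _ _)[/IHt|/IHr]; apply; apply: rtn1_trans aw.
    exact/ac_part_plusl/ac_refl.
  exact/ac_part_plusr/ac_refl.
Qed.

Lemma Forall_atoms (P : tm -> Prop) (t : tm) :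
  (forall a b, P a -> ac_part a b -> P b) -> P t -> Forall P (atoms t).
Proof.
move=> Ppart Pt; apply/Forall_forall => x /(ac_parts_atoms (rtn1_refl _ _ t)).
by elim=> // b c bc _ Pb; apply: Ppart Pb bc.
Qed.

Lemma ured_below (a w : tm) : ured a w -> Forall (below^~ a) (atoms w).
Proof.
move=> aw; apply/Forall_forall => x /(ac_parts_atoms (rtn1_refl _ _ w)).
elim=> [|b c bc _ IH]; first by apply: t_step; left.
by apply: t_trans IH; apply: t_step; right.
Qed.

Lemma below_ac (k a a' : tm) : ac_eq a a' -> below k a -> below k a'.
Proof.
move=> aa' ka; elim: ka a' aa' => {k a} [k a [ak | [[r akr] | [c akc]]] | k b a kb _ _ IH] a' aa'.
- by apply: t_step; left; apply: ured_acl (ac_sym aa') ak.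
- by apply: t_step; right; apply: ac_part_plusl (ac_trans (ac_sym aa') akr).
- by apply: t_step; right; apply: ac_part_scal (ac_trans (ac_sym aa') akc).
- exact: t_trans kb (IH _ aa').
Qed.

Lemma uSN_of_mult l : Acc (clos_trans _ (mult_step below)) l ->
  forall t : tm, ac_eqv (atoms t) l -> uSN t.
Proof.
elim=> {}l _ IHl t; move: {2}(am t).+1 (ltnSn (am t)) => n.
elim: n t => [|n IHn] t tn tl; first by rewrite ltn0 in tn.
constructor=> t' [x [y [tx xy yt']]].
have lx : ac_eqv l (atoms x) := ac_eqv_trans (ac_eqv_sym tl) (ac_atoms tx).
have t'y : ac_eqv (atoms t') (atoms y) := ac_eqv_sym (ac_atoms yt').
case: (uctx_atoms xy) => [[am_xy [[|k m] xym]] | [a [w [M [xaM aw ywM]]]]].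
- apply: IHn; first by rewrite (ac_am yt') -(ac_am tx) in am_xy; lia.
  apply: ac_eqv_trans t'y (ac_eqv_sym (ac_eqv_trans lx _)).
  by apply: Permutation_ac_eqv; rewrite app_nil_r in xym.
- have [l' l'l l'y] := mult_drop_eqv below (ac_eqv_trans lx (Permutation_ac_eqv xym)).
  exact: IHl l' l'l t' (ac_eqv_trans t'y (ac_eqv_sym l'y)).
- have [l' l'l l'wM] := mult_step_eqv (@ac_refl S) (@ac_sym S) below_ac
    (ac_eqv_trans lx (Permutation_ac_eqv xaM)) (ured_below aw).
  apply: (IHl l' (t_step _ _ _ _ l'l) t').
  exact: ac_eqv_trans t'y (ac_eqv_trans (Permutation_ac_eqv ywM) (ac_eqv_sym l'wM)).
Qed.

Lemma uSN_of_atoms (t : tm) : Forall uSN (atoms t) -> uSN t.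
Proof.
move=> snt; apply: uSN_of_mult (ac_eqv_refl _).
apply/Acc_clos_trans/Acc_mult; apply: Forall_impl snt => a /Acc_ord.
exact: Acc_clos_trans.
Qed.

Lemma uSN_map (f : tm -> tm) (t : tm) :
  (forall a b, ured a b -> ured (f a) (f b)) -> uSN (f t) -> uSN t.
Proof.
move=> fred; move eft: (f t) => ft sn; elim: sn t eft => {}ft _ IH t eft.
by constructor=> t' tt'; apply: (IH (f t') _ t' erefl); rewrite -eft; apply: fred.
Qed.

Lemma Forall_atoms_ured (P : tm -> Prop) (t t' : tm) :
  (forall a b, ac_eq a b -> P a -> P b) -> (forall a w, P a -> ured a w -> Forall P (atoms w)) ->
  ured t t' -> Forall P (atoms t) -> Forall P (atoms t').
Proof.
move=> Pac Pred [x [y [tx xy yt']]] /(Forall_perm_eqv Pac (ac_atoms tx)) Px.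
apply: Forall_perm_eqv Pac (ac_atoms yt') _.
case: (uctx_atoms xy) => [[_ [l xyl]] | [a [w [M [xaM aw ywM]]]]].
  by move: Px => /(Permutation_Forall xyl) /Forall_app[].
move: Px => /(Permutation_Forall xaM) /Forall_cons_iff[Pa PM].
apply: Permutation_Forall (Permutation_sym ywM) _.
by apply/Forall_app; split; first exact: Pred Pa aw.
Qed.

(** * Reducibility candidates *)

Definition neutral (t : tm) : Prop :=
  match t with Var _ | App _ _ => True | _ => False end.

Record cand (X : tm -> Prop) : Prop := Cand {
  cand_uSN t : X t -> uSN t;
  cand_ured t t' : X t -> ured t t' -> X t';
  cand_neutral t : neutral t -> (forall t', ured t t' -> X t') -> X t;
  cand_zero : X (Zero S);
  cand_plus t r : X (Plus t r) <-> X t /\ X r;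
  cand_scal c t : X (Scal c t) <-> X t;
  cand_ac t t' : ac_eq t t' -> X t -> X t' }.

Lemma cand_var X n : cand X -> X (Var S n).
Proof. by move=> candX; apply: cand_neutral => // t' /ured_var. Qed.

Lemma cand_part X (a b : tm) : cand X -> X a -> ac_part a b -> X b.
Proof.
move=> candX Xa [[r abr]|[c abc]].
  by have /(cand_plus candX) [] := cand_ac candX abr Xa.
exact/(cand_scal candX)/(cand_ac candX abc Xa).
Qed.

Lemma uSN_cand : cand uSN.
Proof.
split.
- by [].
- by move=> t t' sn tt'; apply: (Acc_inv sn tt').
- by move=> t _ sn; constructor.
- exact: (@uSN_of_atoms (Zero S) (Forall_nil _)).
- move=> t r; split=> [sn | [snt snr]].
    by split; apply: uSN_part sn _; [apply: ac_part_plusl | apply: ac_part_plusr]; apply: ac_refl.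
  by apply: uSN_of_atoms; apply/Forall_app; split; apply: Forall_atoms uSN_part _.
- move=> c t; split=> [sn | snt]; first by apply: uSN_part sn _; apply/ac_part_scal/ac_refl.
  by apply: uSN_of_atoms; apply: Forall_atoms uSN_part snt.
- move=> t t' tt' sn; constructor=> w t'w.
  exact: (Acc_inv sn (ured_acl tt' t'w)).
Qed.

Definition arr (X Y : tm -> Prop) (t : tm) : Prop := forall u, X u -> Y (App t u).

Section Arrow.
Variables X Y : tm -> Prop.
Hypotheses (candX : cand X) (candY : cand Y).

Lemma arr_ac (t t' : tm) : ac_eq t t' -> arr X Y t -> arr X Y t'.
Proof. by move=> tt' tXY u /tXY; apply: (cand_ac candY (ac_app tt' (ac_refl u))). Qed.

Lemma arr_ured (t t' : tm) : arr X Y t -> ured t t' -> arr X Y t'.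
Proof. by move=> tXY tt' u /tXY /(cand_ured candY); apply; apply: ured_appl. Qed.

Lemma arr_uSN (t : tm) : arr X Y t -> uSN t.
Proof.
move=> /(_ _ (cand_var 0 candX)) /(cand_uSN candY).
by apply: (@uSN_map (fun a => App a (Var S 0))) => a b; apply: ured_appl.
Qed.

Lemma arr_part (a b : tm) : arr X Y a -> ac_part a b -> arr X Y b.
Proof.
move=> aXY [[r abr]|[c abc]] u /aXY /cand_ured Yau.
  by have /(cand_plus candY) [] := Yau candY _ (fun_red_ured (fun_red_plus _ abr)).
exact/(cand_scal candY)/(Yau candY _ (fun_red_ured (fun_red_scal _ abc))).
Qed.

(* The reducts of [(t) u] coming from [u] are handled here once and for all, by induction on [u]. *)
Lemma arr_of_fun_red (t : tm) : (forall u w, X u -> fun_red t u w -> Y w) -> arr X Y t.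
Proof.
move=> tY u Xu; have accu := Acc_ord (cand_uSN candX Xu).
elim: accu Xu => {}u _ IHu Xu.
apply: (cand_neutral candY) => // w /ured_app_inv [w' w'red w'w]; apply: (cand_ac candY w'w).
case: w'red => [tw | [u' uu' | u1 u2 uu12 | c u1 uu1 | _]].
- exact: tY Xu tw.
- by apply: IHu; [left | apply: (cand_ured candX Xu uu')].
- have [p1 p2] := (ac_part_plusl uu12, ac_part_plusr uu12).
  apply/(cand_plus candY); split.
    by apply: IHu; [right | apply: (cand_part candX Xu p1)].
  by apply: IHu; [right | apply: (cand_part candX Xu p2)].
- have p1 := ac_part_scal uu1.
  by apply/(cand_scal candY); apply: IHu; [right | apply: (cand_part candX Xu p1)].
- exact: (cand_zero candY).
Qed.

Lemma arr_neutral (t : tm) : neutral t -> (forall t', ured t t' -> arr X Y t') -> arr X Y t.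
Proof.
move=> nt tXY; apply: arr_of_fun_red => u w Xu.
case=> [t' tt' | t1 t2 ht | c t1 ht | ht | s ht _]; first exact: tXY t' tt' u Xu.
all: by move/ac_eq_top: ht; case: t nt {tXY}.
Qed.

Lemma arr_of_atoms (t : tm) : Forall (arr X Y) (atoms t) -> arr X Y t.
Proof.
move=> tXY; have /Acc_ord acct : uSN t by apply/uSN_of_atoms/(Forall_impl _ arr_uSN).
elim: acct tXY => {}t _ IHt tXY; apply: arr_of_fun_red => u w Xu.
case=> [t' tt' | t1 t2 tt12 | c t1 tt1 | _ | s ts bu].
- apply: IHt (or_introl tt') _ u Xu.
  apply: Forall_atoms_ured arr_ac _ tt' tXY => a b /arr_ured aXY /aXY.
  exact: Forall_atoms arr_part.
- have /Forall_app [t1XY t2XY] := Forall_perm_eqv arr_ac (ac_atoms tt12) tXY.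
  apply/(cand_plus candY); split.
    exact: IHt (or_intror (ac_part_plusl tt12)) t1XY u Xu.
  exact: IHt (or_intror (ac_part_plusr tt12)) t2XY u Xu.
- have t1XY := Forall_perm_eqv arr_ac (ac_atoms tt1) tXY.
  exact/(cand_scal candY)/(IHt _ (or_intror (ac_part_scal tt1)) t1XY u Xu).
- exact: (cand_zero candY).
- have {}tXY : arr X Y t.
    by move: (ac_eq_top ts) tXY; clear IHt; case: t {ts} => // s' _ /Forall_cons_iff[].
  exact: (cand_ured candY (tXY u Xu) (fun_red_ured (fun_red_beta ts bu))).
Qed.

Lemma arr_lam (s : tm) : (forall b, X b -> basis b -> Y (subst 0 b s)) -> arr X Y (Lam s).
Proof.
move=> sY; have sns : uSN s.
  apply: (@uSN_map (subst 0 (Var S 0))); last exact: (cand_uSN candY (sY _ (cand_var 0 candX) I)).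
  by move=> a b; apply: ured_subst.
elim: sns sY => {}s _ IHs sY; apply: arr_of_fun_red => u w Xu.
case=> [t' /ured_lam_inv[s' ss' s't'] | t1 t2 /ac_eq_top [] | c t1 /ac_eq_top [] | /ac_eq_top [] |
        s' /ac_eq_top ss' bu].
- apply: (cand_ac candY (ac_app s't' (ac_refl u))); apply: (IHs s' ss' _ u Xu).
  by move=> b Xb bb; apply: (cand_ured candY (sY b Xb bb)); apply: ured_subst.
- exact: (cand_ac candY (ac_subst_l 0 u ss') (sY u Xu bu)).
Qed.

Lemma cand_arr : cand (arr X Y).
Proof.
split.
- exact: arr_uSN.
- by move=> t t' tXY tt'; apply: arr_ured tXY tt'.
- exact: arr_neutral.
- exact: (@arr_of_atoms (Zero S) (Forall_nil _)).
- move=> t r; split=> [trXY | [tXY rXY]].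
    by split; apply: arr_part trXY _; [apply: ac_part_plusl | apply: ac_part_plusr]; apply: ac_refl.
  by apply: arr_of_atoms; apply/Forall_app; split; apply: Forall_atoms arr_part _.
- move=> c t; split=> [tXY | tXY]; first by apply: arr_part tXY _; apply/ac_part_scal/ac_refl.
  by apply: arr_of_atoms; apply: Forall_atoms arr_part tXY.
- exact: arr_ac.
Qed.
End Arrow.

(** * Interpretation of types *)

Fixpoint interp (A : ty) (rho : nat -> tm -> Prop) : tm -> Prop :=
  match A with
  | TVar n => rho n
  | TArr A B => arr (interp A rho) (interp B rho)
  | TAll A => fun t => forall X, cand X -> interp A (scons X rho) t
  end.

Lemma cand_forall (F : (tm -> Prop) -> tm -> Prop) :
  (forall X, cand X -> cand (F X)) -> cand (fun t => forall X, cand X -> F X t).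
Proof.
move=> candF; split.
- by move=> t FXt; apply: (cand_uSN (candF _ uSN_cand) (FXt _ uSN_cand)).
- by move=> t t' FXt tt' X candX; apply: (cand_ured (candF X candX) (FXt X candX) tt').
- move=> t nt Ft X candX; apply: (cand_neutral (candF X candX) nt) => t' tt'.
  exact: Ft t' tt' X candX.
- by move=> X candX; apply: (cand_zero (candF X candX)).
- move=> t r; split=> [Ftr | [Ft Fr] X candX].
    by split=> X candX; have /(cand_plus (candF X candX)) [] := Ftr X candX.
  by apply/(cand_plus (candF X candX)); split; [apply: Ft | apply: Fr].
- move=> c t; split=> Ft X candX.
    exact: (proj1 (cand_scal (candF X candX) c t) (Ft X candX)).
  exact: (proj2 (cand_scal (candF X candX) c t) (Ft X candX)).
- by move=> t t' tt' Ft X candX; apply: (cand_ac (candF X candX) tt' (Ft X candX)).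
Qed.

Lemma interp_cand A rho : (forall n, cand (rho n)) -> cand (interp A rho).
Proof.
elim: A rho => [n|A IHA B IHB|A IHA] rho candrho /=; first exact: candrho.
  by apply: cand_arr; [apply: IHA | apply: IHB].
by apply: (cand_forall (F := fun X => interp A (scons X rho))) => X candX; apply: IHA => -[].
Qed.

Lemma arr_iff (X X' Y Y' : tm -> Prop) : (forall t, X t <-> X' t) -> (forall t, Y t <-> Y' t) ->
  forall t, arr X Y t <-> arr X' Y' t.
Proof. by move=> XX' YY' t; split=> tXY u /XX' /tXY /YY'. Qed.

Lemma interp_ext A rho rho' : (forall n t, rho n t <-> rho' n t) ->
  forall t, interp A rho t <-> interp A rho' t.
Proof.
elim: A rho rho' => [n|A IHA B IHB|A IHA] rho rho' rr' t /=; first exact: rr'.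
  by apply: arr_iff => u; [apply: IHA | apply: IHB].
have rr'X X : forall n u, scons X rho n u <-> scons X rho' n u by case.
by split=> At X candX; apply/(IHA _ _ (rr'X X))/At.
Qed.

Lemma interp_tlift A d c rho t :
  interp (tlift d c A) rho t <-> interp A (fun n => rho (if n < c then n else n + d)) t.
Proof.
elim: A c rho t => [n|A IHA B IHB|A IHA] c rho t /=; first by case: ifP.
  by apply: arr_iff => u; [apply: IHA | apply: IHB].
have envE X n u : scons X rho (if n < c.+1 then n else n + d) u <->
    scons X (fun n => rho (if n < c then n else n + d)) n u.
  by case: n => //= n; rewrite ltnS; case: ifP.
by split=> At X candX;
  [apply/(interp_ext _ (envE X))/IHA | apply/IHA/(interp_ext _ (envE X))]; apply: At.
Qed.

Definition tsubst_env (n : nat) (B : ty) (rho : nat -> tm -> Prop) (m : nat) : tm -> Prop :=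
  if m < n then rho m else if m == n then interp B (fun k => rho (k + n)) else rho m.-1.

Lemma interp_tsubst A n B rho t : interp (tsubst n B A) rho t <-> interp A (tsubst_env n B rho) t.
Proof.
elim: A n rho t => [m|A IHA C IHC|A IHA] n rho t /=.
- rewrite /tsubst_env; case: ifP => //= _; case: ifP => //= _.
  by rewrite interp_tlift; apply: interp_ext.
- by apply: arr_iff => u; [apply: IHA | apply: IHC].
have envE X k u : tsubst_env n.+1 B (scons X rho) k u <-> scons X (tsubst_env n B rho) k u.
  case: k => [|k] //=; rewrite /tsubst_env ltnS eqSS; case: ifP => // kn; case: ifP => kn'.
    by apply: interp_ext => j v /=; rewrite addnS.
  by case: k kn kn' => //; case: n.
by split=> At X candX;
  [apply/(interp_ext _ (envE X))/IHA | apply/IHA/(interp_ext _ (envE X))]; apply: At.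
Qed.

Lemma typed_interp G t A : typed G t A -> forall rho, (forall n, cand (rho n)) ->
  forall sg, (forall n B, onth G n = Some B -> interp B rho (sg n)) -> interp A rho (psub sg t).
Proof.
elim=> {G t A}.
- by move=> G n A GnA rho _ sg sgG; apply: sgG.
- move=> G t A B _ IH rho candrho sg sgG /=.
  apply: arr_lam => [||b Ab bb]; try exact: interp_cand.
  by rewrite subst_up_sub; apply: IH => // -[|k] C /= ; [case=> <- | apply: sgG].
- move=> G t r A B _ IHt _ IHr rho candrho sg sgG /=.
  exact: IHt rho candrho sg sgG _ (IHr rho candrho sg sgG).
- move=> G t A B _ IH rho candrho sg sgG.
  apply/interp_tsubst/(interp_ext _ (rho := scons (interp B rho) rho)).
    by case=> [|k] u; rewrite /tsubst_env //=; apply: interp_ext => j v; rewrite addn0.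
  exact: IH rho candrho sg sgG _ (interp_cand B candrho).
- move=> G t A _ IH rho candrho sg sgG /= X candX.
  apply: IH => [[]|n B] //; rewrite onth_map; case: (onth G n) (sgG n) => [C|] //= sgC [<-].
  by apply/interp_tlift/(interp_ext _ (rho' := rho)) => [k u|]; [rewrite addn1 | apply: sgC].
- by move=> G A rho candrho sg _; apply: (cand_zero (interp_cand A candrho)).
- move=> G t r A _ IHt _ IHr rho candrho sg sgG /=.
  by apply/(cand_plus (interp_cand A candrho)); split; [apply: IHt | apply: IHr].
- move=> G c t A _ IH rho candrho sg sgG /=.
  by apply/(cand_scal (interp_cand A candrho)); apply: IH.
Qed.

Lemma ctx_uctx N (a b : tm) : ctx N a b -> uctx a b.
Proof.
elim=> {a b}; try by move=> *; constructor.
by move=> a b [] *; do 2!constructor.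
Qed.

Lemma uSN_SN (t : tm) : uSN t -> SN t.
Proof.
elim=> {}t _ IH; constructor=> t' [x [y [tx /ctx_uctx xy yt']]].
by apply: IH; exists x, y.
Qed.
End Lineal.

Theorem mainTheorem3 (S : comPzRingType) (G : seq ty) (t : term S) (A : ty) :
  typed G t A -> SN t.
Proof.
move=> tA; apply: uSN_SN.
pose rho (_ : nat) := @uSN S; have candrho n : cand (rho n) := uSN_cand S.
have := typed_interp tA candrho (fun n B _ => cand_var n (interp_cand B candrho)).
by rewrite psub_id; apply: (cand_uSN (interp_cand A candrho)).
Qed.
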